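(* Suppose Assumption (A2) holds and, in addition, $B$ is $\mu$-strongly monotone w.r.t. $S$ for some $\mu>0$ (i.e. $\langle Bx-By,x-y\rangle\ge\mu\|x-y\|_S^2$ for all $x,y$); let $x^*$ be the solution of $0\in Ax+Bx+Cx$. Let $p\in(0,1)$, $\lambda=1-p$, $L\ge\frac{3-p}{2}$, $\varepsilon_3>0$, $\alpha>0$, and suppose $L_k+\alpha\le\frac{1-\sqrt p}{4}$ for all $k$. Let $\bar L=\sup_kL_k$ and $\gamma=\min\{\frac{\sqrt p}{2\theta},\frac p\beta,\frac{\alpha}{\bar L\theta}\}$ (with $\frac{\alpha}{0}=+\infty$). For $k\ge1$ let $$c_k=\min\Big\{\frac{\gamma\mu}{1+\frac{L_k}{2L\varepsilon_3}},\ \frac{2L\big(1-p-L_{k-1}-\alpha-(1-p)(\alpha+L_k)\big)}{(1-p)L_k(\varepsilon_3+1)},\ \frac{Lp\big(1-\sqrt p-4(L_k+\alpha)\big)}{2(1-p)(4+p)+2pL_k(\varepsilon_3+1)}\Big\}$$ (the middle term read as $+\infty$ if $L_k=0$), and let $c$ be any real number with $0\le c\le c_k$ for all $k\ge1$. Then the sequences generated by Algorithm SVR-NFBHF-M (with this $\lambda,p,\gamma$) satisfy, for all $k\ge1$, $$(1-p-L_k)\,\mathbb E\|x_{k+1}-x^*\|_S^2\le\frac{\mathbb E\big[(1-p)\|x_1-x^*\|_S^2+\|\omega_1-x^*\|_S^2+d_1\big]}{(1+c/(2L))^k},$$ where $d_1=2\langle u_1,x_1-x^*\rangle+L_0\|y_0-\bar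 x_0\|_S^2$.
   Context: $\mathcal X$ is a separable real Hilbert space with Borel $\sigma$-algebra; all random variables live on a probability space $(\Omega,\mathcal F,P)$; $\mathbb E$ is (full) expectation. $\mathcal P(\mathcal X)$ is the set of bounded linear self-adjoint strongly positive operators $S$ ($\langle Sx,x\rangle\ge m\|x\|^2$, $m>0$); $\langle x,y\rangle_S=\langle Sx,y\rangle$, $\|x\|_S=\sqrt{\langle Sx,x\rangle}$. For $S\in\mathcal P(\mathcal X)$, $T$ is $L$-Lipschitz w.r.t. $S$ if $\|Tx-Ty\|_{S^{-1}}\le L\|x-y\|_S$, and $\beta^{-1}$-cocoercive w.r.t. $S$ if $\langle Tx-Ty,x-y\rangle\ge\beta^{-1}\|Tx-Ty\|_{S^{-1}}^2$. Assumption (A2): fix $S\in\mathcal P(\mathcal X)$. (i) $A:\mathcal X\to2^{\mathcal X}$ is maximally monotone; (ii) $B=\sum_{i=1}^NB_i$ where each $B_i:\mathcal X\to\mathcal X$ is monotone and Lipschitz; $Q$ is a probability distribution on $\{1,\dots,N\}$ and $B_\xi:\mathcal X\to\mathcal X$ ($\xi\in\{1,\dots,N\}$) are operators (stochastic oracle) with $\mathbb E_{\xi\sim Q}[B_\xi(x)]=B(x)$ for all $x$ and $\mathbb E_{\xi\sim Q}\|B_\xi u-B_\xi v\|_{S^{-1}}^2\le\theta^2\|u-v\|_S^2$ for all $u,v$, some $\theta>0$; (iii) $C:\mathcal X\to\mathcal X$ is $\beta^{-1}$-cocoercive w.r.t. $S$, $\beta>0$; (iv) the solution set $\Omega^*=\{x:0\in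 Ax+Bx+Cx\}$ is nonempty; (v) $\gamma>0$ and for each $k$, $M_k:\mathcal X\to\mathcal X$ is an operator such that $\gamma M_k-S$ is $L_k$-Lipschitz w.r.t. $S$ with $L_k\in[0,1)$ (so $(M_k+A)^{-1}$ is single-valued with full domain). Algorithm SVR-NFBHF-M: parameters $p\in(0,1]$, $\lambda\ge0$; initial $x_0,u_0\in\mathcal X$, $\omega_0=x_0$. For $k=0,1,\dots$: $\bar x_k=\lambda x_k+(1-\lambda)\omega_k$; $y_k=(M_k+A)^{-1}\big(M_k\bar x_k-(B+C)\omega_k+\gamma^{-1}u_k\big)$; $u_{k+1}=(\gamma M_k-S)y_k-(\gamma M_k-S)\bar x_k$; draw $\xi_k\sim Q$ independently of the past; $x_{k+1}=y_k-\gamma S^{-1}B_{\xi_k}y_k+\gamma S^{-1}B_{\xi_k}\omega_k$; $\omega_{k+1}=x_{k+1}$ with probability $p$ and $\omega_{k+1}=\omega_k$ with probability $1-p$ (independent coin). *)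

From mathcomp Require Import all_boot all_order all_algebra.
From mathcomp Require Import reals.
Set Implicit Arguments. Unset Strict Implicit. Unset Printing Implicit Defensive.
Import Order.TTheory GRing.Theory Num.Theory.
Local Open Scope ring_scope.

Section Defs.
Variables (R : realType) (X : lmodType R) (ip : X -> X -> R).

Definition hnorm (x : X) : R := Num.sqrt (ip x x).

Definition separable_hilbert : Prop :=
  [/\ (forall x y, ip x y = ip y x),
      (forall a x y z, ip (a *: x + y) z = a * ip x z + ip y z),
      (forall x, 0 <= ip x x),
      (forall x, ip x x = 0 -> x = 0) /\
      (forall u : nat -> X,
         (forall e, 0 < e -> exists n0, forall m n, (n0 <= m)%N -> (n0 <= n)%N ->
             hnorm (u m - u n) < e) ->
         exists l, forall e, 0 < e -> exists n0, forall n, (n0 <= n)%N ->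
             hnorm (u n - l) < e)
    &
      exists d : nat -> X, forall x e, 0 < e -> exists n, hnorm (x - d n) < e].

Definition strongly_pos_op (S : X -> X) : Prop :=
  [/\ (forall a x y, S (a *: x + y) = a *: S x + S y),
      (exists M, forall x, hnorm (S x) <= M * hnorm x),
      (forall x y, ip (S x) y = ip x (S y))
    & exists m, 0 < m /\ forall x, m * ip x x <= ip (S x) x].

Definition normS (S : X -> X) (x : X) : R := Num.sqrt (ip (S x) x).

Definition lipschitz_wrt (S Sinv : X -> X) (T : X -> X) (Lc : R) : Prop :=
  forall x y, normS Sinv (T x - T y) <= Lc * normS S (x - y).

Definition cocoercive_wrt (S Sinv : X -> X) (T : X -> X) (beta : R) : Prop :=
  forall x y, beta^-1 * (normS Sinv (T x - T y)) ^+ 2 <= ip (T x - T y) (x - y).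

Definition strongly_monotone_wrt (S : X -> X) (T : X -> X) (mu : R) : Prop :=
  forall x y, mu * (normS S (x - y)) ^+ 2 <= ip (T x - T y) (x - y).

Definition monotone_op (T : X -> X) : Prop :=
  forall x y, 0 <= ip (T x - T y) (x - y).

Definition lipschitz_op (T : X -> X) : Prop :=
  exists Lc, 0 <= Lc /\ forall x y, hnorm (T x - T y) <= Lc * hnorm (x - y).

(* set-valued operators A : X -> 2^X, encoded as relations: A x u <-> u \in A x *)
Definition monotone_set_op (A : X -> X -> Prop) : Prop :=
  forall x y u v, A x u -> A y v -> 0 <= ip (u - v) (x - y).

Definition maximally_monotone (A : X -> X -> Prop) : Prop :=
  monotone_set_op A /\
  forall A' : X -> X -> Prop, monotone_set_op A' ->
    (forall x u, A x u -> A' x u) -> forall x u, A' x u -> A x u.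

End Defs.

(* The step size gamma = min { sqrt p / (2 theta), p / beta, alpha / (Lbar theta) },
   where alpha / 0 = +oo. *)
Definition gamma_def (R : realType) (p theta beta alpha Lbar : R) : R :=
  let g := Num.min (Num.sqrt p / (2 * theta)) (p / beta) in
  if Lbar == 0 then g else Num.min g (alpha / (Lbar * theta)).

(* c <= c_k, where c_k is the minimum of three terms, the middle one being
   +oo when L_k = 0. Here Lk = L_k, Lkm1 = L_{k-1}. *)
Definition le_ck (R : realType) (c gamma mu L eps3 alpha p Lk Lkm1 : R) : Prop :=
  [/\ c <= gamma * mu / (1 + Lk / (2 * L * eps3)),
      (Lk != 0 -> c <= 2 * L * (1 - p - Lkm1 - alpha - (1 - p) * (alpha + Lk))
                        / ((1 - p) * Lk * (eps3 + 1)))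
    & c <= L * p * (1 - Num.sqrt p - 4 * (Lk + alpha))
           / (2 * (1 - p) * (4 + p) + 2 * p * Lk * (eps3 + 1))].

(* Canonical discrete model of the randomness of SVR-NFBHF-M: the history up
   to iteration k is the sequence of pairs (xi_j, coin_j), j < k, where
   xi_j ~ Q and coin_j ~ Bernoulli(p), all independent. *)
Definition hist_weight (R : realType) (N : nat) (Q : 'I_N -> R) (p : R)
  (h : seq ('I_N * bool)) : R :=
  \prod_(a <- h) (Q a.1 * (if a.2 then p else 1 - p)).

Definition expect (R : realType) (N : nat) (Q : 'I_N -> R) (p : R) (k : nat)
  (f : seq ('I_N * bool) -> R) : R :=
  \sum_(t : k.-tuple ('I_N * bool)) hist_weight Q p t * f t.

From mathcomp Require Import all_boot all_order all_algebra.
From mathcomp Require Import reals.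
From mathcomp Require Import ring lra.
Import Order.TTheory GRing.Theory Num.Theory.
Local Open Scope ring_scope.

(* Lyapunov argument.  Put xbar_k = (1-p) x_k + p w_k and
     Phi_k = (1-p) |x_k - x*|^2 + |w_k - x*|^2 + 2 <u_k, x_k - x*>
             + L_{k-1} |y_{k-1} - xbar_{k-1}|^2     (norms in S).
   Monotonicity of A at y_k and x*, unbiasedness and the variance bound of
   the oracle, cocoercivity of C and strong monotonicity of B give, after averaging over
   xi_k and the coin, E_k Phi_{k+1} <= Phi_k - D_k, where D_k is a quadratic form in
   y_k - x_k and y_k - w_k plus a multiple of |y_k - x*|^2; the bounds on L_k, gamma and c
   make (c / 2L) E_k Phi_{k+1} <= D_k, hence (1 + c/2L) E_k Phi_{k+1} <= Phi_k.  Since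
   |u_k|_{S^-1} <= L_{k-1} |y_{k-1} - xbar_{k-1}|_S, Young's inequality gives
   Phi_{k+1} >= (1 - p - L_k) |x_{k+1} - x*|^2, and the tower property over the history
   iterates the contraction. *)

Lemma unit_interval_poly_le_quarter (R : realFieldType) (s : R) : 0 <= s <= 1 ->
  (1 - s) / 8 + 9 * s ^+ 2 / 256 + s ^+ 2 * (1 - s) / 2 + s ^+ 2 * (1 - s) ^+ 2
  <= 1 / 4.
Proof.
move=> /andP[s0 s1].
have t0 : 0 <= s * (1 - s) by rewrite mulr_ge0 // subr_ge0.
have t1 : s * (1 - s) <= 1 / 4 by have := sqr_ge0 (s - 1 / 2); rewrite expr2; lra.
have t2 : (s * (1 - s)) ^+ 2 <= s * (1 - s) / 4.
  by rewrite expr2; have := mulr_ge0 t0 (_ : 0 <= 1 / 4 - s * (1 - s)); nra.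
have t3 : 0 <= s * (1 - s) * (1 - s) by rewrite !mulr_ge0 // subr_ge0.
have t4 : 0 <= s * s * (1 - s) by rewrite !mulr_ge0 // subr_ge0.
rewrite -exprMn; rewrite !expr2 in t2 *; nra.
Qed.

Lemma descent_coeff1_ge (R : realFieldType) (p l E : R) :
  0 <= p <= 1 -> l <= (1 - p) / 4 -> 0 <= E <= 1 / 2 ->
  (1 - p) / 4 <= (1 - p) - l - E * (1 - p) ^+ 2.
Proof.
move=> /andP[p0 p1] hl /andP[E0 E1].
have : (1 - p) ^+ 2 <= 1 - p by rewrite expr2; nra.
nra.
Qed.

Lemma descent_coeff2_ge (R : realFieldType) (p s k l' E r t : R) :
  0 < s < 1 -> p = s ^+ 2 -> t + r = 1 - s -> 0 <= r ->
  0 <= k <= p / 16 -> 16 * (k * (1 - p)) <= p * r ->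
  0 <= l' <= t / 4 -> 0 <= E <= t / 2 ->
  4 * E ^+ 2 * p ^+ 2 * (1 - p)
  <= p - (3 * p / 4 + p * l' / 4 + k * (p / 2 + p * l' / 4 + 2 * (1 - p))) - E * p ^+ 2.
Proof.
move=> /andP[s0 s1] ps tr r0 /andP[k0 kp] kr /andP[l'0 l't] /andP[E0 Et].
have p0 : 0 < p by rewrite ps exprn_gt0.
have p1 : p < 1 by rewrite ps expr2; nra.
have q1 : k * (p / 2 + p * l' / 4) <= 9 * p ^+ 2 / 256.
  have h : p / 2 + p * l' / 4 <= 9 * p / 16 by nra.
  have h0 : 0 <= p / 2 + p * l' / 4 by nra.
  apply: le_trans (ler_pM k0 h0 kp h) _; rewrite expr2; lra.
have q2 : 4 * E ^+ 2 * p ^+ 2 * (1 - p) <= p ^+ 2 * (1 - s) ^+ 2.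
  have h2E : 2 * E <= 1 - s by lra.
  have hE : (2 * E) ^+ 2 <= (1 - s) ^+ 2 by rewrite !expr2; nra.
  have pp : 0 <= p ^+ 2 by rewrite sqr_ge0.
  rewrite exprMn in hE.
  have := ler_wpM2r pp hE; have := mulr_ge0 (mulr_ge0 (sqr_ge0 E) pp) (ltW p0).
  rewrite !expr2; nra.
have q3 : E * p ^+ 2 <= p ^+ 2 * (1 - s) / 2 by rewrite !expr2; nra.
have q4 : p * l' / 4 + p * r / 8 <= p * (1 - s) / 8 by nra.
have P := @unit_interval_poly_le_quarter R s ltac:(apply/andP; split; lra).
rewrite -ps in P; have {}P := ler_wpM2l (ltW p0) P.
rewrite !expr2 in q1 q2 q3 P *; nra.
Qed.

(* [c1], [c2] and [- (E * p * (1 - p))] are the coefficients of [|y - x|^2], [|y - w|^2] and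
   [2 <y - x, y - w>] in the part of the one-step descent that must stay nonnegative. *)
Lemma descent_coeffs_psd (R : realFieldType) (p s l l' k e3 al : R) :
  0 < s < 1 -> p = s ^+ 2 ->
  0 <= l <= (1 - s) / 4 -> 0 <= l' -> 0 <= al -> l' + al <= (1 - s) / 4 ->
  0 <= k -> 0 < e3 ->
  4 * k * (1 - p) * (4 + p) + 4 * p * k * l' * (1 + e3) <= p * (1 - s - 4 * (l' + al)) ->
  let E := 2 * l' + k * (2 + e3) * l' in
  let c1 := (1 - p) - l - E * (1 - p) ^+ 2 in
  let c2 := p - (3 * p / 4 + p * l' / 4 + k * (p / 2 + p * l' / 4 + 2 * (1 - p)))
            - E * p ^+ 2 in
  0 < c1 /\ (- (E * p * (1 - p))) ^+ 2 <= c1 * c2.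
Proof.
move=> /andP[s0 s1] ps /andP[l0 ll] l'0 al0 l'al k0 e30 kbound E c1 c2.
have p0 : 0 < p by rewrite ps exprn_gt0.
have [p_le_s p1] : p <= s /\ p < 1 by rewrite ps expr2; split; nra.
set r := 1 - s - 4 * (l' + al) - 4 * (k * l' * (1 + e3)).
have w0 : 0 <= k * l' * (1 + e3) by rewrite !mulr_ge0 //; lra.
have kr : 16 * (k * (1 - p)) <= p * r.
  have : 0 <= k * (1 - p) * p by rewrite !mulr_ge0 //; lra.
  rewrite /r; lra.
have r0 : 0 <= r.
  have k1p : 0 <= k * (1 - p) by rewrite mulr_ge0 //; lra.
  by rewrite -(pmulr_rge0 _ p0); lra.
have kp : k <= p / 16.
  have pr : p * r <= p * (1 - p) by rewrite ler_wpM2l ?(ltW p0) // /r; lra.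
  have : 0 <= (p / 16 - k) * (1 - p).
    have -> : (p / 16 - k) * (1 - p) = (p * (1 - p) - 16 * (k * (1 - p))) / 16.
      by field.
    by rewrite divr_ge0 //; lra.
  by rewrite pmulr_lge0 ?subr_gt0; lra.
have [E0 Er] : 0 <= E /\ E <= (1 - s - r) / 2.
  have kl : 0 <= k * l' by rewrite mulr_ge0.
  have kel : 0 <= k * e3 * l' by rewrite !mulr_ge0 // ltW.
  by rewrite /E /r; split; lra.
have c1_ge : (1 - p) / 4 <= c1.
  by apply: descent_coeff1_ge; try (apply/andP; split); lra.
have c2_ge : 4 * E ^+ 2 * p ^+ 2 * (1 - p) <= c2.
  apply: (@descent_coeff2_ge R p s k l' E r (1 - s - r)); rewrite ?subrK ?s0 ?k0 ?l'0 ?E0 //=.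
  by rewrite /r; lra.
split; first lra.
rewrite sqrrN.
have -> : (E * p * (1 - p)) ^+ 2 = (1 - p) / 4 * (4 * E ^+ 2 * p ^+ 2 * (1 - p)).
  by rewrite !expr2; field.
by apply: ler_pM c1_ge c2_ge; rewrite ?mulr_ge0 ?sqr_ge0 //; lra.
Qed.

Lemma scale_comb_subr (R : pzRingType) (X : lmodType R) (p : R) (x w z : X) :
  ((1 - p) *: x + p *: w) - z = (1 - p) *: (x - z) + p *: (w - z).
Proof. by rewrite !scalerBr addrACA -opprD -scalerDl subrK scale1r. Qed.

Lemma subr_scale_comb (R : pzRingType) (X : lmodType R) (p : R) (x w y : X) :
  y - ((1 - p) *: x + p *: w) = (1 - p) *: (y - x) + p *: (y - w).
Proof. by rewrite !scalerBr addrACA -scalerDl subrK scale1r -opprD. Qed.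

Section SMetric.
Variables (R : realType) (X : lmodType R) (ip : X -> X -> R) (S Sinv : X -> X).
Hypotheses (HX : separable_hilbert ip) (HS : strongly_pos_op ip S).
Hypotheses (SK : cancel Sinv S) (SinvK : cancel S Sinv).

Let ip_sym x y : ip x y = ip y x. Proof. by case: HX. Qed.
Let ip_lin a x y z : ip (a *: x + y) z = a * ip x z + ip y z. Proof. by case: HX. Qed.
Let S_lin a x y : S (a *: x + y) = a *: S x + S y. Proof. by case: HS. Qed.

Lemma ip0l z : ip 0 z = 0.
Proof.
have := ip_lin 1 0 0 z; rewrite scale1r addr0 mul1r => H.
by apply: (addrI (ip 0 z)); rewrite -H addr0.
Qed.

Lemma ipDl x y z : ip (x + y) z = ip x z + ip y z.
Proof. by have := ip_lin 1 x y z; rewrite scale1r mul1r. Qed.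
Lemma ipZl a x z : ip (a *: x) z = a * ip x z.
Proof. by have := ip_lin a x 0 z; rewrite addr0 ip0l addr0. Qed.
Lemma ipNl x z : ip (- x) z = - ip x z.
Proof. by rewrite -scaleN1r ipZl mulN1r. Qed.
Lemma ipBl x y z : ip (x - y) z = ip x z - ip y z.
Proof. by rewrite ipDl ipNl. Qed.
Lemma ipDr x y z : ip z (x + y) = ip z x + ip z y.
Proof. by rewrite ip_sym ipDl !(ip_sym z). Qed.
Lemma ipZr a x z : ip z (a *: x) = a * ip z x.
Proof. by rewrite ip_sym ipZl (ip_sym z). Qed.
Lemma ipNr x z : ip z (- x) = - ip z x.
Proof. by rewrite ip_sym ipNl (ip_sym z). Qed.
Lemma ipBr x y z : ip z (x - y) = ip z x - ip z y.
Proof. by rewrite ipDr ipNr. Qed.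
Lemma ip_suml I (r : seq I) (P : pred I) (F : I -> X) z :
  ip (\sum_(i <- r | P i) F i) z = \sum_(i <- r | P i) ip (F i) z.
Proof. by elim/big_rec2: _ => [|i y1 y2 _ <-]; rewrite ?ip0l ?ipDl. Qed.

Lemma linS0 : S 0 = 0.
Proof.
have := S_lin 1 0 0; rewrite !scale1r addr0 => H.
by apply: (addrI (S 0)); rewrite -H addr0.
Qed.
Lemma linSD x y : S (x + y) = S x + S y.
Proof. by have := S_lin 1 x y; rewrite !scale1r. Qed.
Lemma linSZ a x : S (a *: x) = a *: S x.
Proof. by have := S_lin a x 0; rewrite !addr0 linS0 addr0. Qed.
Lemma linSN x : S (- x) = - S x.
Proof. by rewrite -scaleN1r linSZ scaleN1r. Qed.
Lemma linSB x y : S (x - y) = S x - S y.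
Proof. by rewrite linSD linSN. Qed.
Lemma linSinvB x y : Sinv (x - y) = Sinv x - Sinv y.
Proof. by apply: (can_inj SinvK); rewrite linSB !SK. Qed.

Definition dotS u v := ip (S u) v.
Definition sqnS u := dotS u u.
Definition sqnSinv d := ip (Sinv d) d.

Lemma dotS_sym u v : dotS u v = dotS v u.
Proof. by case: HS => _ _ S_adj _; rewrite /dotS S_adj ip_sym. Qed.
Lemma dotSDl u v z : dotS (u + v) z = dotS u z + dotS v z.
Proof. by rewrite /dotS linSD ipDl. Qed.
Lemma dotSZl a u z : dotS (a *: u) z = a * dotS u z.
Proof. by rewrite /dotS linSZ ipZl. Qed.
Lemma dotSBl u v z : dotS (u - v) z = dotS u z - dotS v z.
Proof. by rewrite /dotS linSB ipBl. Qed.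
Lemma dotSDr u v z : dotS z (u + v) = dotS z u + dotS z v.
Proof. by rewrite /dotS ipDr. Qed.
Lemma dotSZr a u z : dotS z (a *: u) = a * dotS z u.
Proof. by rewrite /dotS ipZr. Qed.
Lemma dotSBr u v z : dotS z (u - v) = dotS z u - dotS z v.
Proof. by rewrite /dotS ipBr. Qed.

Lemma sqnS_ge0 u : 0 <= sqnS u.
Proof.
case: HS => _ _ _ [m [m0 Hm]]; apply: le_trans (Hm u).
by case: HX => _ _ ip_ge0 _ _; rewrite mulr_ge0 // ltW.
Qed.
Lemma sqnSD u v : sqnS (u + v) = sqnS u + 2 * dotS u v + sqnS v.
Proof. rewrite /sqnS dotSDl !dotSDr (dotS_sym v u); ring. Qed.
Lemma sqnSB u v : sqnS (u - v) = sqnS u - 2 * dotS u v + sqnS v.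
Proof. rewrite /sqnS dotSBl !dotSBr (dotS_sym v u); ring. Qed.
Lemma sqnSZ a u : sqnS (a *: u) = a ^+ 2 * sqnS u.
Proof. by rewrite /sqnS dotSZl dotSZr mulrA expr2. Qed.
Lemma sqnSN u : sqnS (- u) = sqnS u.
Proof. by rewrite -scaleN1r sqnSZ expr2 mulN1r opprK mul1r. Qed.
Lemma sqnS_addE u v : sqnS (u + v) = sqnS u - sqnS v + 2 * dotS v (u + v).
Proof. rewrite sqnSD dotSDr (dotS_sym v u) /sqnS; ring. Qed.
Lemma sqnSB_le u v : sqnS (u - v) <= 2 * sqnS u + 2 * sqnS v.
Proof. have := sqnS_ge0 (u + v); rewrite sqnSD sqnSB; lra. Qed.

Lemma sqnS_comb a b u v :
  sqnS (a *: u + b *: v) = a ^+ 2 * sqnS u + 2 * (a * b) * dotS u v + b ^+ 2 * sqnS v.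
Proof. by rewrite sqnSD !sqnSZ dotSZl dotSZr; ring. Qed.

Lemma ip_dotS d z : ip d z = dotS (Sinv d) z.
Proof. by rewrite /dotS SK. Qed.
Lemma sqnSinvE d : sqnSinv d = sqnS (Sinv d).
Proof. by rewrite /sqnS /dotS SK ip_sym. Qed.
Lemma sqnSinv_ge0 d : 0 <= sqnSinv d.
Proof. by rewrite sqnSinvE sqnS_ge0. Qed.

Lemma sqnSinv_eq0 d : sqnSinv d <= 0 -> d = 0.
Proof.
move=> d0; have {}d0 : sqnS (Sinv d) = 0.
  by apply/eqP; rewrite eq_le -sqnSinvE d0 sqnSinv_ge0.
case: HS => _ _ _ [m [m0 Hm]]; case: HX => _ _ ip_ge0 [ip_eq0 _] _.
have := Hm (Sinv d); rewrite -/(dotS _ _) -/(sqnS _) d0 pmulr_rle0 // => Hd.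
have : ip (Sinv d) (Sinv d) = 0 by apply/eqP; rewrite eq_le Hd ip_ge0.
by move/ip_eq0 => Sinv_d0; rewrite -(SK d) Sinv_d0 linS0.
Qed.

Lemma normS_sqr u : normS ip S u ^+ 2 = sqnS u.
Proof. by rewrite sqr_sqrtr // sqnS_ge0. Qed.
Lemma normSinv_sqr d : normS ip Sinv d ^+ 2 = sqnSinv d.
Proof. by rewrite sqr_sqrtr // sqnSinv_ge0. Qed.

Lemma lipschitz_wrt_sqr (T : X -> X) (l : R) (a b : X) :
  lipschitz_wrt ip S Sinv T l -> sqnSinv (T a - T b) <= l ^+ 2 * sqnS (a - b).
Proof.
move=> HT; rewrite -normSinv_sqr -normS_sqr -exprMn !expr2.
by rewrite ler_pM ?sqrtr_ge0 ?HT.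
Qed.

Lemma young_dotS u v t : 0 < t -> 2 * dotS u v <= t * sqnS u + t^-1 * sqnS v.
Proof.
move=> t0; rewrite -subr_ge0.
have -> : t * sqnS u + t^-1 * sqnS v - 2 * dotS u v = t^-1 * sqnS (t *: u - v).
  by rewrite sqnSB sqnSZ dotSZl; field; rewrite gt_eqF.
by rewrite mulr_ge0 ?sqnS_ge0 // invr_ge0 ltW.
Qed.

Lemma young_dual d z l r t : 0 <= l -> 0 <= r -> 0 < t ->
  sqnSinv d <= l ^+ 2 * r -> 2 * ip d z <= t * l * r + l / t * sqnS z.
Proof.
move=> l0 r0 t0; have [->|l_neq0] := eqVneq l 0 => Hd.
  move: Hd; rewrite expr0n /= mul0r => /sqnSinv_eq0 ->.
  by rewrite ip0l !(mulr0, mul0r) addr0.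
have lpos : 0 < l by rewrite lt_def l_neq0 l0.
rewrite ip_dotS; apply: le_trans (@young_dotS _ z _ (divr_gt0 t0 lpos)) _.
rewrite -sqnSinvE invf_div lerD2r.
have -> : t * l * r = t / l * (l ^+ 2 * r) by rewrite expr2 !mulrA mulfVK ?gt_eqF.
by rewrite ler_wpM2l // divr_ge0 // ltW.
Qed.

Lemma sqnS_quadratic_ge0 (c1 c2 c12 : R) (u v : X) : 0 < c1 -> c12 ^+ 2 <= c1 * c2 ->
  0 <= c1 * sqnS u + 2 * c12 * dotS u v + c2 * sqnS v.
Proof.
move=> c10 H; rewrite -(pmulr_rge0 _ c10).
have -> : c1 * (c1 * sqnS u + 2 * c12 * dotS u v + c2 * sqnS v)
       = sqnS (c1 *: u + c12 *: v) + (c1 * c2 - c12 ^+ 2) * sqnS v.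
  by rewrite sqnS_comb; ring.
by rewrite addr_ge0 ?sqnS_ge0 // mulr_ge0 ?sqnS_ge0 // subr_ge0.
Qed.

Lemma cocoercive_cross_le (beta g p : R) (v e W : X) :
  0 < beta -> 0 < g -> g * beta <= p -> beta^-1 * sqnSinv v <= ip v e ->
  - 2 * g * ip v (e + W) <= p / 2 * sqnS W.
Proof.
move=> be0 g0 gbe hC.
have hY := @young_dotS (Sinv v) (- W) _ (divr_gt0 (ltr0Sn _ 1) be0).
rewrite -sqnSinvE sqnSN -ip_dotS ipNr invf_div in hY.
have h1 := ler_wpM2l (ltW g0) hC; have h2 := ler_wpM2l (ltW g0) hY.
have h3 := ler_wpM2r (sqnS_ge0 W) gbe.
rewrite ipDr; lra.
Qed.

Lemma monotone_resolvent_ge0 (A : X -> X -> Prop) (M Bs C : X -> X) (g : R)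
    (xb w u y xs : X) :
  monotone_set_op ip A -> 0 < g ->
  A y (M xb - (Bs w + C w) + g^-1 *: u - M y) -> A xs (- (Bs xs + C xs)) ->
  0 <= ip (S xb - S y - ((g *: M y - S y) - (g *: M xb - S xb)) + u
           - g *: (Bs w - Bs xs) - g *: (C w - C xs)) (y - xs).
Proof.
move=> HA g0 Ay Axs; have := HA _ _ _ _ Ay Axs; rewrite -(pmulr_rge0 _ g0).
suff -> : ip (S xb - S y - ((g *: M y - S y) - (g *: M xb - S xb)) + u
              - g *: (Bs w - Bs xs) - g *: (C w - C xs)) (y - xs)
  = g * ip (M xb - (Bs w + C w) + g^-1 *: u - M y - - (Bs xs + C xs)) (y - xs) by [].
by rewrite !(ipBl, ipDl, ipNl, ipZl); field; rewrite gt_eqF.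
Qed.

(* [r] stands for [|y_{k-1} - xbar_{k-1}|_S^2], which controls [|u_k|_{S^-1}^2 / l^2]. *)
Definition lyapunov (p l : R) (xs x w u : X) (r : R) :=
  (1 - p) * sqnS (x - xs) + sqnS (w - xs) + 2 * ip u (x - xs) + l * r.

Lemma lyapunov_ge (p l r : R) (xs x w u : X) : 0 <= l -> 0 <= r ->
  sqnSinv u <= l ^+ 2 * r -> (1 - p - l) * sqnS (x - xs) <= lyapunov p l xs x w u r.
Proof.
move=> l0 r0 Hu; have := @young_dual u (- (x - xs)) _ _ _ l0 r0 ltr01 Hu.
rewrite ipNr sqnSN divr1 mul1r /lyapunov => H.
have := sqnS_ge0 (w - xs); lra.
Qed.

Definition step_weight {R : pzRingType} {N : nat} (Q : 'I_N -> R) (p : R)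
  (a : 'I_N * bool) : R := Q a.1 * (if a.2 then p else 1 - p).

Section OneStep.
Variables (N : nat) (Q : 'I_N -> R) (Bo : 'I_N -> X -> X) (Bs C : X -> X).
Variables (theta beta mu : R).
Hypotheses (HQ0 : forall i, 0 <= Q i) (HQ1 : \sum_i Q i = 1).
Hypothesis Hunb : forall z, \sum_i Q i *: Bo i z = Bs z.
Hypothesis Hvar : forall a b,
  \sum_i Q i * normS ip Sinv (Bo i a - Bo i b) ^+ 2 <= theta ^+ 2 * normS ip S (a - b) ^+ 2.
Hypotheses (HC : cocoercive_wrt ip S Sinv C beta) (HBmu : strongly_monotone_wrt ip S Bs mu).

Lemma mean_affine (a b c : R) (f h : 'I_N -> R) :
  \sum_i Q i * (a + b * f i + c * h i)
  = a + b * (\sum_i Q i * f i) + c * (\sum_i Q i * h i).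
Proof.
rewrite (eq_bigr (fun i => a * Q i + b * (Q i * f i) + c * (Q i * h i))) => [|i _];
  last by ring.
by rewrite !big_split /= -!mulr_sumr HQ1 mulr1.
Qed.

Lemma mean_le_affine (a b : R) (f h : 'I_N -> R) : (forall i, f i <= a + b * h i) ->
  \sum_i Q i * f i <= a + b * (\sum_i Q i * h i).
Proof.
move=> fh; apply: le_trans (_ : \sum_i Q i * (a + b * h i + 0 * h i) <= _).
  by apply: ler_sum => i _; rewrite mul0r addr0 ler_wpM2l.
by rewrite mean_affine mul0r addr0.
Qed.

Lemma mean_sqnS_stoch_step (g : R) (e : X) (G : 'I_N -> X) :
  \sum_i Q i * sqnS (e - g *: Sinv (G i))
  = sqnS e - 2 * g * ip (\sum_i Q i *: G i) e + g ^+ 2 * \sum_i Q i * sqnSinv (G i).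
Proof.
have -> : ip (\sum_i Q i *: G i) e = \sum_i Q i * ip (G i) e.
  by rewrite ip_suml; apply: eq_bigr => i _; rewrite ipZl.
rewrite (eq_bigr (fun i => Q i * (sqnS e + (- 2 * g) * ip (G i) e + g ^+ 2 * sqnSinv (G i))))
  => [|i _]; last by rewrite sqnSB sqnSZ -sqnSinvE dotSZr dotS_sym -ip_dotS; congr (_ * _); ring.
by rewrite mean_affine; ring.
Qed.

Lemma mean_cross_stoch_step_le (g l' n : R) (u' e : X) (G : 'I_N -> X) :
  0 <= l' -> 0 <= n -> sqnSinv u' <= l' ^+ 2 * n ->
  \sum_i Q i * (2 * ip u' (e - g *: Sinv (G i)))
  <= 2 * ip u' e + l' * n + l' * g ^+ 2 * \sum_i Q i * sqnSinv (G i).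
Proof.
move=> l'0 n0 Hu'; apply: mean_le_affine => i.
have := @young_dual u' (- (g *: Sinv (G i))) _ _ _ l'0 n0 ltr01 Hu'.
rewrite ipNr sqnSN sqnSZ -sqnSinvE mul1r divr1 ipBr; lra.
Qed.

Lemma mean_sqnS_stoch_step_le (g : R) (e : X) (G : 'I_N -> X) :
  \sum_i Q i * sqnS (e - g *: Sinv (G i))
  <= 2 * sqnS e + 2 * g ^+ 2 * \sum_i Q i * sqnSinv (G i).
Proof.
apply: mean_le_affine => i.
by have := sqnSB_le e (g *: Sinv (G i)); rewrite sqnSZ -sqnSinvE mulrA.
Qed.

Lemma mean_sqnSinv_oracle_le (g p : R) (a b : X) : g ^+ 2 * theta ^+ 2 <= p / 4 ->
  g ^+ 2 * \sum_i Q i * sqnSinv (Bo i a - Bo i b) <= p / 4 * sqnS (a - b).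
Proof.
have := Hvar a b; rewrite normS_sqr; under eq_bigr => i _ do rewrite normSinv_sqr.
move=> var gth; apply: le_trans (ler_wpM2l (sqr_ge0 g) var) _.
by rewrite mulrA ler_wpM2r ?sqnS_ge0.
Qed.

Definition oracle_step (g : R) (y w : X) (i : 'I_N) : X :=
  y - g *: Sinv (Bo i y) + g *: Sinv (Bo i w).

Lemma oracle_stepE g y w xs i :
  oracle_step g y w i - xs = (y - xs) - g *: Sinv (Bo i y - Bo i w).
Proof.
by rewrite /oracle_step linSinvB scalerBr opprB addrAC (addrAC y) addrA addrAC.
Qed.

Definition lyapunov_next_mean (p g l' : R) (xs w y u' xb : X) : R :=
  \sum_i Q i * (sqnS (oracle_step g y w i - xs) + 2 * ip u' (oracle_step g y w i - xs))
  + (1 - p) * sqnS (w - xs) + l' * sqnS (y - xb).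

Lemma mean_step_lyapunov (p g l' : R) (xs w y u' xb : X) :
  \sum_(a : 'I_N * bool) step_weight Q p a
     * lyapunov p l' xs (oracle_step g y w a.1)
         (if a.2 then oracle_step g y w a.1 else w) u' (sqnS (y - xb))
  = lyapunov_next_mean p g l' xs w y u' xb.
Proof.
pose F i (b : bool) := step_weight Q p (i, b) * lyapunov p l' xs (oracle_step g y w i)
  (if b then oracle_step g y w i else w) u' (sqnS (y - xb)).
rewrite (eq_bigr (fun a => F a.1 a.2)); last by case.
rewrite -(pair_bigA _ F) /=.
rewrite (eq_bigr (fun i => Q i * (sqnS (oracle_step g y w i - xs)
           + 2 * ip u' (oracle_step g y w i - xs))
         + Q i * ((1 - p) * sqnS (w - xs) + l' * sqnS (y - xb)))); last first.
  by move=> i _; rewrite big_bool /F /step_weight /lyapunov /=; ring.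
by rewrite big_split /= -mulr_suml HQ1 mul1r addrA.
Qed.

Lemma descent_energy (p g l l' r : R) (xs x w u y u' : X) :
  let xb := (1 - p) *: x + p *: w in
  0 <= p <= 1 -> 0 < g -> g ^+ 2 * theta ^+ 2 <= p / 4 -> g * beta <= p -> 0 < beta ->
  0 <= l -> 0 <= l' -> 0 <= r ->
  sqnSinv u <= l ^+ 2 * r -> sqnSinv u' <= l' ^+ 2 * sqnS (y - xb) ->
  0 <= ip (S xb - S y - u' + u - g *: (Bs w - Bs xs) - g *: (C w - C xs)) (y - xs) ->
  lyapunov_next_mean p g l' xs w y u' xb
  <= lyapunov p l xs x w u r
     - (p * (1 - p) * sqnS (x - w) + (1 - 2 * l') * sqnS (y - xb) - l * sqnS (y - x)
        - (3 * p / 4 + p * l' / 4) * sqnS (y - w) + 2 * g * mu * sqnS (y - xs)).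
Proof.
move=> xb /andP[p0 p1] g0 gth gbe be0 l0 l'0 r0 Hu Hu' Hinc.
have HG : \sum_i Q i *: (Bo i y - Bo i w) = (Bs y - Bs xs) - (Bs w - Bs xs).
  by rewrite (eq_bigr _ (fun i _ => scalerBr _ _ _)) sumrB !Hunb opprB subrKA.
rewrite /lyapunov_next_mean; under eq_bigr => i _ do rewrite oracle_stepE mulrDr.
rewrite big_split /= mean_sqnS_stoch_step HG ipBl.
have var := @mean_sqnSinv_oracle_le g p y w gth.
have var' := ler_wpM2l l'0 var.
have /= cross := @mean_cross_stoch_step_le g l' _ u' (y - xs) (fun i => Bo i y - Bo i w)
  l'0 (sqnS_ge0 _) Hu'.
have resolvent : 0 <= ip (S xb) (y - xs) - ip (S y) (y - xs) - ip u' (y - xs)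
    + ip u (y - xs) - g * ip (Bs w - Bs xs) (y - xs) - g * ip (C w - C xs) (y - xs).
  by move: Hinc; rewrite !(ipDl, ipNl, ipZl) => Hinc; lra.
have split_y : sqnS (y - xs)
    = sqnS (xb - xs) - sqnS (y - xb) + 2 * (ip (S y) (y - xs) - ip (S xb) (y - xs)).
  have e : y - xs = (xb - xs) + (y - xb) by rewrite [RHS]addrC subrKA.
  have -> : ip (S y) (y - xs) - ip (S xb) (y - xs) = dotS (y - xb) (y - xs).
    by rewrite /dotS linSB ipBl.
  by rewrite {1}e (sqnS_addE (xb - xs)) -e.
have split_xb : sqnS (xb - xs)
    = (1 - p) * sqnS (x - xs) + p * sqnS (w - xs) - p * (1 - p) * sqnS (x - w).
  have exw : x - w = (x - xs) - (w - xs) by rewrite opprB subrKA.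
  by rewrite /xb scale_comb_subr sqnS_comb exw (sqnSB (x - xs)); ring.
have strong := HBmu y xs; rewrite normS_sqr in strong.
have {}strong := ler_wpM2l (ltW g0) strong.
have cocoercive := HC w xs; rewrite normSinv_sqr in cocoercive.
have {}cocoercive := @cocoercive_cross_le beta g p _ _ (y - w) be0 g0 gbe cocoercive.
rewrite (_ : w - xs + (y - w) = y - xs) in cocoercive; last by rewrite addrC subrKA.
have young_u := @young_dual u (y - x) _ _ _ l0 r0 ltr01 Hu.
rewrite mul1r divr1 in young_u.
have split_u : ip u (y - xs) = ip u (x - xs) + ip u (y - x).
  by rewrite -ipDr [in RHS]addrC subrKA.
rewrite /lyapunov; lra.
Qed.

Lemma descent_growth (p g l' e3 : R) (xs w y u' xb : X) :
  0 <= p <= 1 -> 0 <= l' -> 0 < e3 -> g ^+ 2 * theta ^+ 2 <= p / 4 ->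
  sqnSinv u' <= l' ^+ 2 * sqnS (y - xb) ->
  lyapunov_next_mean p g l' xs w y u' xb
  <= (4 - 2 * p + l' / e3) * sqnS (y - xs)
     + (p / 2 + p * l' / 4 + 2 * (1 - p)) * sqnS (y - w) + (2 + e3) * l' * sqnS (y - xb).
Proof.
move=> /andP[p0 p1] l'0 e30 gth Hu'.
rewrite /lyapunov_next_mean; under eq_bigr => i _ do rewrite oracle_stepE mulrDr.
rewrite big_split /=.
have var := @mean_sqnSinv_oracle_le g p y w gth.
have var' := ler_wpM2l l'0 var.
have /= sq := @mean_sqnS_stoch_step_le g (y - xs) (fun i => Bo i y - Bo i w).
have /= cross := @mean_cross_stoch_step_le g l' _ u' (y - xs) (fun i => Bo i y - Bo i w)
  l'0 (sqnS_ge0 _) Hu'.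
have young_u' := @young_dual u' (y - xs) _ _ _ l'0 (sqnS_ge0 _) e30 Hu'.
have w_le : sqnS (w - xs) <= 2 * sqnS (y - xs) + 2 * sqnS (y - w).
  have -> : w - xs = (y - xs) - (y - w) by rewrite opprB [RHS]addrC subrKA.
  exact: sqnSB_le.
have := ler_wpM2l (_ : 0 <= 1 - p) w_le; rewrite subr_ge0 => /(_ p1) w_le'.
lra.
Qed.

Lemma descent_step (p g l l' k e3 al r : R) (xs x w u y u' : X) :
  let xb := (1 - p) *: x + p *: w in
  0 < p < 1 -> 0 <= l <= (1 - Num.sqrt p) / 4 -> 0 <= l' -> 0 <= al ->
  l' + al <= (1 - Num.sqrt p) / 4 -> 0 <= k -> 0 < e3 ->
  4 * k * (1 - p) * (4 + p) + 4 * p * k * l' * (1 + e3)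
    <= p * (1 - Num.sqrt p - 4 * (l' + al)) ->
  0 < g -> g ^+ 2 * theta ^+ 2 <= p / 4 -> g * beta <= p -> 0 < beta ->
  k * (4 - 2 * p + l' / e3) <= 2 * g * mu -> 0 <= r ->
  sqnSinv u <= l ^+ 2 * r -> sqnSinv u' <= l' ^+ 2 * sqnS (y - xb) ->
  0 <= ip (S xb - S y - u' + u - g *: (Bs w - Bs xs) - g *: (C w - C xs)) (y - xs) ->
  (1 + k) * lyapunov_next_mean p g l' xs w y u' xb <= lyapunov p l xs x w u r.
Proof.
move=> xb p01 l01 l'0 al0 l'al k0 e30 kbound g0 gth gbe be0 rate r0 Hu Hu' Hinc.
have [p0 p1] := andP p01; have p01' : 0 <= p <= 1 by rewrite !ltW.
have s01 : 0 < Num.sqrt p < 1 by rewrite sqrtr_gt0 p0 -sqrtr1 ltr_sqrt.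
have ps : p = Num.sqrt p ^+ 2 by rewrite sqr_sqrtr // ltW.
have [l0 _] := andP l01.
have energy := @descent_energy p g l l' r xs x w u y u' p01' g0 gth gbe be0 l0 l'0 r0
  Hu Hu' Hinc.
have growth := @descent_growth p g l' e3 xs w y u' xb p01' l'0 e30 gth Hu'.
have [c1_gt0 c12_le] := @descent_coeffs_psd _ p (Num.sqrt p) l l' k e3 al s01 ps l01
  l'0 al0 l'al k0 e30 kbound.
have form_ge0 := @sqnS_quadratic_ge0 _ _ _ (y - x) (y - w) c1_gt0 c12_le.
have split_a : sqnS (y - xb) = (1 - p) ^+ 2 * sqnS (y - x)
    + 2 * ((1 - p) * p) * dotS (y - x) (y - w) + p ^+ 2 * sqnS (y - w).
  by rewrite /xb subr_scale_comb sqnS_comb.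
have split_b : sqnS (x - w) = sqnS (y - w) - 2 * dotS (y - x) (y - w) + sqnS (y - x).
  have -> : x - w = (y - w) - (y - x) by rewrite opprB [RHS]addrC subrKA.
  by rewrite sqnSB dotS_sym.
have {}growth := ler_wpM2l k0 growth.
have {}rate := ler_wpM2r (sqnS_ge0 (y - xs)) rate.
rewrite split_a split_b in energy; rewrite split_a in growth; lra.
Qed.

End OneStep.
End SMetric.

Arguments sqnS {R X}.
Arguments sqnSinv {R X}.
Arguments lyapunov {R X}.
Arguments oracle_step {R X} Sinv {N}.

Lemma rcons_tuple_bij (T : finType) (k : nat) :
  bijective (fun pr : k.-tuple T * T => rcons_tuple pr.1 pr.2).
Proof.
have rcons_belast (t : k.+1.-tuple T) :
    rcons (belast (thead t) (behead t)) (last (thead t) (behead t)) = t.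
  by rewrite -lastI [in RHS](tuple_eta t).
exists (fun t => (belast_tuple (thead t) (behead_tuple t), last (thead t) (behead t))).
  move=> [t a]; case: (rcons_inj (rcons_belast (rcons_tuple t a))) => e1 e2.
  by congr pair => //; apply: val_inj.
by move=> t; apply: val_inj; exact: rcons_belast.
Qed.

Section Expectation.
Variables (R : realType) (N : nat) (Q : 'I_N -> R) (p : R).

Lemma expect_rcons (k : nat) (f : seq ('I_N * bool) -> R) :
  expect Q p k.+1 f
  = expect Q p k (fun h => \sum_a step_weight Q p a * f (rcons h a)).
Proof.
rewrite /expect (reindex (fun pr : k.-tuple _ * _ => rcons_tuple pr.1 pr.2)) /=; last first.
  by apply: onW_bij; exact: rcons_tuple_bij.
rewrite -(pair_bigA _ (fun (t : k.-tuple ('I_N * bool)) (a : 'I_N * bool) =>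
  hist_weight Q p (rcons t a) * f (rcons t a))) /=.
apply: eq_bigr => t _; rewrite mulr_sumr; apply: eq_bigr => a _.
by rewrite /hist_weight big_rcons /= -mulrA.
Qed.

Lemma mulr_expect (c : R) (k : nat) (f : seq ('I_N * bool) -> R) :
  c * expect Q p k f = expect Q p k (fun h => c * f h).
Proof. by rewrite /expect mulr_sumr; apply: eq_bigr => t _; rewrite mulrCA. Qed.

Lemma eq_expect (k : nat) (f g : seq ('I_N * bool) -> R) :
  (forall h, size h = k -> f h = g h) -> expect Q p k f = expect Q p k g.
Proof. by move=> fg; apply: eq_bigr => t _; rewrite fg ?size_tuple. Qed.

Hypotheses (HQ0 : forall i, 0 <= Q i) (p01 : 0 <= p <= 1).

Lemma ler_expect (k : nat) (f g : seq ('I_N * bool) -> R) :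
  (forall h, size h = k -> f h <= g h) -> expect Q p k f <= expect Q p k g.
Proof.
move=> fg; apply: ler_sum => t _; rewrite ler_wpM2l ?fg ?size_tuple //.
apply: prodr_ge0 => a _; rewrite mulr_ge0 //.
by case/andP: p01; case: a.2; lra.
Qed.

Lemma expect_geometric_decay (Phi : nat -> seq ('I_N * bool) -> R) (q : R) : 0 <= q ->
  (forall k h, size h = k.+1 ->
     (1 + q) * \sum_a step_weight Q p a * Phi k.+2 (rcons h a) <= Phi k.+1 h) ->
  forall n, (1 + q) ^+ n * expect Q p n.+1 (Phi n.+1) <= expect Q p 1 (Phi 1%N).
Proof.
move=> q0 descent; elim=> [|n IH]; first by rewrite expr0 mul1r.
apply: le_trans IH; rewrite exprSr -mulrA ler_wpM2l ?exprn_ge0 ?addr_ge0 //.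
by rewrite expect_rcons mulr_expect; apply: ler_expect => h /descent.
Qed.

End Expectation.

Lemma gamma_def_bounds (R : realType) (p theta beta alpha Lbar : R) :
  0 < p -> 0 < theta -> 0 < beta -> 0 < alpha -> 0 <= Lbar ->
  let g := gamma_def p theta beta alpha Lbar in
  [/\ 0 < g, g ^+ 2 * theta ^+ 2 <= p / 4 & g * beta <= p].
Proof.
move=> p0 th0 be0 al0 Lb0 g.
set g1 := Num.min (Num.sqrt p / (2 * theta)) (p / beta).
have g1_gt0 : 0 < g1 by rewrite lt_min !divr_gt0 ?sqrtr_gt0 ?mulr_gt0.
have [g0 gg1] : 0 < g /\ g <= g1.
  rewrite /g /gamma_def -/g1; case: eqP => [//|/eqP Lb_neq0].
  rewrite lt_min ge_min lexx g1_gt0 divr_gt0 // mulr_gt0 //.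
  by rewrite lt_def Lb_neq0.
have g1s : g1 <= Num.sqrt p / (2 * theta) by rewrite ge_min lexx.
have g1b : g1 <= p / beta by rewrite ge_min lexx orbT.
have gs : g * theta <= Num.sqrt p / 2.
  have := ler_wpM2r (ltW th0) (le_trans gg1 g1s).
  suff -> : Num.sqrt p / (2 * theta) * theta = Num.sqrt p / 2 by [].
  by field; rewrite gt_eqF.
split => //.
  have gs2 : (g * theta) ^+ 2 <= (Num.sqrt p / 2) ^+ 2.
    by rewrite !expr2 ler_pM // mulr_ge0 ?ltW.
  rewrite -exprMn; apply: le_trans gs2 _.
  rewrite expr_div_n (sqr_sqrtr (ltW p0)).
  by have -> : (2 : R) ^+ 2 = 4 by rewrite expr2; lra.
have := ler_wpM2r (ltW be0) (le_trans gg1 g1b).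
by rewrite mulfVK ?gt_eqF.
Qed.

Lemma le_ck_rate (R : realType) (c g mu L eps3 alpha p l lm : R) :
  0 <= c -> 0 < p < 1 -> (3 - p) / 2 <= L -> 0 < eps3 -> 0 <= l ->
  le_ck c g mu L eps3 alpha p l lm ->
  let kap := c / (2 * L) in
  kap * (4 - 2 * p + l / eps3) <= 2 * g * mu
  /\ 4 * kap * (1 - p) * (4 + p) + 4 * p * kap * l * (1 + eps3)
     <= p * (1 - Num.sqrt p - 4 * (l + alpha)).
Proof.
move=> c0 /andP[p0 p1] HL e0 l0 [T1 _ T3] kap.
have L0 : 0 < L by apply: lt_le_trans HL; lra.
have kap0 : 0 <= kap by rewrite divr_ge0 // mulr_ge0 // ltW.
split.
  have D0 : 0 < 1 + l / (2 * L * eps3).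
    by rewrite ltr_wpDr // divr_ge0 // !mulr_ge0 // ltW.
  move: T1; rewrite ler_pdivlMr // => T1.
  have -> : kap * (4 - 2 * p + l / eps3)
      = 2 * (c * (1 + l / (2 * L * eps3))) - kap * ((4 * L - 4 + 2 * p) + l / eps3).
    by rewrite /kap; field; rewrite !gt_eqF.
  have : 0 <= kap * ((4 * L - 4 + 2 * p) + l / eps3).
    by apply: (mulr_ge0 kap0 (addr_ge0 _ (divr_ge0 l0 (ltW e0)))); lra.
  lra.
have D0 : 0 < 2 * (1 - p) * (4 + p) + 2 * p * l * (eps3 + 1).
  by rewrite ltr_pwDl ?mulr_ge0 ?mulr_gt0 //; lra.
move: T3; rewrite ler_pdivlMr // => T3.
have -> : 4 * kap * (1 - p) * (4 + p) + 4 * p * kap * l * (1 + eps3)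
    = (c * (2 * (1 - p) * (4 + p) + 2 * p * l * (eps3 + 1))) / L.
  by rewrite /kap; field; rewrite gt_eqF.
by rewrite ler_pdivrMr //; lra.
Qed.

Theorem theorem4p2
  (R : realType) (X : lmodType R) (ip : X -> X -> R)
  (HX : separable_hilbert ip)
  (S Sinv : X -> X) (HS : strongly_pos_op ip S)
  (HSinv1 : forall x, S (Sinv x) = x) (HSinv2 : forall x, Sinv (S x) = x)
  (A : X -> X -> Prop) (HA : maximally_monotone ip A)
  (N : nat) (Bi : 'I_N -> X -> X)
  (HBi : forall i, monotone_op ip (Bi i) /\ lipschitz_op ip (Bi i))
  (Q : 'I_N -> R) (HQ0 : forall i, 0 <= Q i) (HQ1 : \sum_i Q i = 1)
  (Bo : 'I_N -> X -> X)
  (Hunb : forall x, \sum_i Q i *: Bo i x = \sum_i Bi i x)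
  (theta : R) (Htheta : 0 < theta)
  (Hvar : forall u v, \sum_i Q i * (normS ip Sinv (Bo i u - Bo i v)) ^+ 2
                      <= theta ^+ 2 * (normS ip S (u - v)) ^+ 2)
  (C : X -> X) (beta : R) (Hbeta : 0 < beta) (HC : cocoercive_wrt ip S Sinv C beta)
  (mu : R) (Hmu : 0 < mu)
  (HBmu : strongly_monotone_wrt ip S (fun x => \sum_i Bi i x) mu)
  (xs : X) (Hxs : A xs (- (\sum_i Bi i xs + C xs)))
  (p L eps3 alpha : R) (Hp : 0 < p < 1) (HL : (3 - p) / 2 <= L)
  (Heps3 : 0 < eps3) (Halpha : 0 < alpha)
  (M : nat -> X -> X) (Lk : nat -> R)
  (HLk : forall k, 0 <= Lk k < 1)
  (HLka : forall k, Lk k + alpha <= (1 - Num.sqrt p) / 4)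
  (Lbar : R) (HLbar1 : forall k, Lk k <= Lbar)
  (HLbar2 : forall b, (forall k, Lk k <= b) -> Lbar <= b)
  (gamma : R) (Hgamma : gamma = gamma_def p theta beta alpha Lbar)
  (HM : forall k, lipschitz_wrt ip S Sinv (fun z => gamma *: M k z - S z) (Lk k))
  (c : R) (Hc0 : 0 <= c)
  (Hc : forall k, (1 <= k)%N -> le_ck c gamma mu L eps3 alpha p (Lk k) (Lk k.-1))
  (* iterates as functions of the history [:: (xi_0, coin_0); ...; (xi_{k-1}, coin_{k-1})] *)
  (x w u y : nat -> seq ('I_N * bool) -> X)
  (Hinit : w 0%N [::] = x 0%N [::])
  (Hy : forall k h, size h = k ->
     let xbar := (1 - p) *: x k h + p *: w k h in
     A (y k h) (M k xbar - (\sum_i Bi i (w k h) + C (w k h)) + gamma^-1 *: u k h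
                - M k (y k h)))
  (Hu : forall k h a, size h = k ->
     let xbar := (1 - p) *: x k h + p *: w k h in
     u k.+1 (rcons h a) = (gamma *: M k (y k h) - S (y k h))
                          - (gamma *: M k xbar - S xbar))
  (Hx : forall k h a, size h = k ->
     x k.+1 (rcons h a) = y k h - gamma *: Sinv (Bo a.1 (y k h))
                                + gamma *: Sinv (Bo a.1 (w k h)))
  (Hw : forall k h a, size h = k ->
     w k.+1 (rcons h a) = if a.2 then x k.+1 (rcons h a) else w k h) :
  let xbar0 := (1 - p) *: x 0%N [::] + p *: w 0%N [::] in
  let d1 := fun h => 2 * ip (u 1%N h) (x 1%N h - xs)
                     + Lk 0%N * (normS ip S (y 0%N [::] - xbar0)) ^+ 2 in
  forall k, (1 <= k)%N ->
    (1 - p - Lk k) * expect Q p k.+1 (fun h => (normS ip S (x k.+1 h - xs)) ^+ 2)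
    <= expect Q p 1 (fun h => (1 - p) * (normS ip S (x 1%N h - xs)) ^+ 2
                              + (normS ip S (w 1%N h - xs)) ^+ 2 + d1 h)
       / (1 + c / (2 * L)) ^+ k.
Proof.
move=> xbar0 d1 k _.
have [p0 p1] := andP Hp; have p01 : 0 <= p <= 1 by rewrite !ltW.
have Lk0 j : 0 <= Lk j by case/andP: (HLk j).
have [g0 gth gbe] : [/\ 0 < gamma, gamma ^+ 2 * theta ^+ 2 <= p / 4 & gamma * beta <= p].
  by rewrite Hgamma; apply: gamma_def_bounds => //; apply: le_trans (HLbar1 0%N).
have descent := @descent_step _ _ ip S Sinv HX HS HSinv1 HSinv2 N Q Bo
  (fun z => \sum_i Bi i z) C theta beta mu HQ0 HQ1 Hunb Hvar HC HBmu.
pose kap := c / (2 * L).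
have kap0 : 0 <= kap by rewrite divr_ge0 // mulr_ge0 //; lra.
pose xbar j h := (1 - p) *: x j h + p *: w j h.
pose r j h := sqnS ip S (y j.-1 (take j.-1 h) - xbar j.-1 (take j.-1 h)).
pose Phi j h := lyapunov ip S p (Lk j.-1) xs (x j h) (w j h) (u j h) (r j h).
have u_bound j h : size h = j.+1 -> sqnSinv ip Sinv (u j.+1 h) <= Lk j ^+ 2 * r j.+1 h.
  case/lastP: h => // h a; rewrite size_rcons => -[sh].
  rewrite /r /= (Hu _ _ _ sh) -cats1 (take_size_cat _ sh).
  exact: (@lipschitz_wrt_sqr _ _ ip S Sinv HX HS HSinv1 _ _ _ _ (HM j)).
have Phi_descent j h : size h = j.+1 ->
    (1 + kap) * \sum_a step_weight Q p a * Phi j.+2 (rcons h a) <= Phi j.+1 h.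
  move=> sh; set xb := xbar j.+1 h.
  set u' := (gamma *: M j.+1 (y j.+1 h) - S (y j.+1 h)) - (gamma *: M j.+1 xb - S xb).
  have Phi_next a : Phi j.+2 (rcons h a) = lyapunov ip S p (Lk j.+1) xs
      (oracle_step Sinv Bo gamma (y j.+1 h) (w j.+1 h) a.1)
      (if a.2 then oracle_step Sinv Bo gamma (y j.+1 h) (w j.+1 h) a.1 else w j.+1 h)
      u' (sqnS ip S (y j.+1 h - xb)).
    rewrite /Phi /r /= -cats1 (take_size_cat _ sh) cats1.
    by rewrite (Hu _ _ _ sh) (Hw _ _ _ sh) (Hx _ _ _ sh).
  under eq_bigr => a _ do rewrite Phi_next.
  rewrite (@mean_step_lyapunov _ _ ip S Sinv N Q Bo HQ1).
  have [rate kbound] := @le_ck_rate _ c gamma mu L eps3 alpha p _ _ Hc0 Hp HL Heps3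
    (Lk0 _) (Hc j.+1 isT).
  apply: (descent p gamma (Lk j) (Lk j.+1) kap eps3 alpha (r j.+1 h)
            xs (x j.+1 h) (w j.+1 h) (u j.+1 h) (y j.+1 h) u') => //.
  - by rewrite Lk0 /=; have := HLka j; lra.
  - exact: ltW.
  - exact: (@sqnS_ge0 _ _ ip S HX HS).
  - exact: u_bound.
  - exact: (@lipschitz_wrt_sqr _ _ ip S Sinv HX HS HSinv1 _ _ _ _ (HM j.+1)).
  - exact: (@monotone_resolvent_ge0 _ _ ip S HX A (M j.+1) (fun z => \sum_i Bi i z) C
      gamma xb (w j.+1 h) (u j.+1 h) (y j.+1 h) xs HA.1 g0 (Hy _ _ sh) Hxs).
have decay := @expect_geometric_decay _ _ Q p HQ0 p01 Phi kap kap0 Phi_descent k.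
have nS2 := @normS_sqr _ _ ip S HX HS.
have Phi_ge : (1 - p - Lk k) * expect Q p k.+1 (fun h => normS ip S (x k.+1 h - xs) ^+ 2)
              <= expect Q p k.+1 (Phi k.+1).
  rewrite mulr_expect; apply: ler_expect => // h sh; rewrite nS2.
  exact: (@lyapunov_ge _ _ ip S Sinv HX HS HSinv1 p (Lk k) (r k.+1 h) xs _ (w k.+1 h)
    (u k.+1 h) (Lk0 k) (@sqnS_ge0 _ _ ip S HX HS _) (u_bound k h sh)).
have Phi1 : expect Q p 1 (Phi 1%N) = expect Q p 1 (fun h =>
    (1 - p) * normS ip S (x 1%N h - xs) ^+ 2 + normS ip S (w 1%N h - xs) ^+ 2 + d1 h).
  by apply: eq_expect => h _; rewrite /Phi /r /d1 /= take0 !nS2 /lyapunov addrA.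
rewrite -Phi1 ler_pdivlMr ?exprn_gt0 // -/kap; last by lra.
by rewrite mulrC; apply: le_trans decay; rewrite ler_wpM2l ?exprn_ge0 //; lra.
Qed.
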